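(* Let $p\ge1$, $m\in\mathbb{N}$, $a,b>0$, $\beta\in\mathbb{R}^p$, let $\xi$ be a design on $\mathcal{X}$, and define $$L(\xi;\beta)=I-\frac{M_{Po}(\xi;\beta)e_1e_1^T}{e_1^TM_{Po}(\xi;\beta)e_1+\frac{b}{m}},$$ with $I$ the $p\times p$ identity matrix. Then: (i) $M(\xi;\beta)=\frac{a}{b}L(\xi;\beta)M_{Po}(\xi;\beta)=\frac{a}{b}M_{Po}(\xi;\beta)L(\xi;\beta)^T$; (ii) $L(\xi;\beta)$ is regular; (iii) $L(\xi;\beta)=I-\frac{m}{a}M(\xi;\beta)e_1e_1^T$.
   Context: Let $\mathcal{X}\subseteq\mathbb{R}^k$ be a design region and $f=(1,f_1,\ldots,f_{p-1})^T:\mathcal{X}\to\mathbb{R}^p$ a vector of regression functions whose first component is the constant 1. A design $\xi$ is a probability measure on $\mathcal{X}$ with finite support $x_1,\ldots,x_l$ and weights $w_1,\ldots,w_l\ge0$, $\sum_j w_j=1$. The Poisson information matrix is $M_{Po}(\xi;\beta)=\sum_{j=1}^l w_j\exp(f(x_j)^T\beta)f(x_j)f(x_j)^T$, and the Poisson–Gamma information matrix is $M(\xi;\beta)=\frac{a}{b}\Bigl(M_{Po}(\xi;\beta)-\frac{M_{Po}(\xi;\beta)e_1e_1^TM_{Po}(\xi;\beta)}{e_1^TM_{Po}(\xi;\beta)e_1+b/m}\Bigr)$, where $e_1$ is the first standard unit vector of $\mathbb{R}^p$. *)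

From HB Require Import structures.
From mathcomp Require Import all_boot all_order all_algebra.
From mathcomp Require Import all_classical all_reals all_analysis.
Set Implicit Arguments. Unset Strict Implicit. Unset Printing Implicit Defensive.
Import Order.TTheory GRing.Theory Num.Theory.
Local Open Scope ring_scope.

(* The paper's dimension p >= 1 is written p.+1 throughout. *)
Definition e1 {R : realType} {p : nat} : 'cV[R]_p.+1 := delta_mx 0 0.

(* Poisson information matrix of the design with support x_0..x_{l-1}
   and weights w_0..w_{l-1}. *)
Definition MPo {R : realType} {k p l : nat} (f : 'rV[R]_k -> 'cV[R]_p.+1)
  (x : 'I_l -> 'rV[R]_k) (w : 'I_l -> R) (beta : 'cV[R]_p.+1) : 'M[R]_p.+1 :=
  \sum_(j < l) (w j * expR (((f (x j))^T *m beta) 0 0)) *: (f (x j) *m (f (x j))^T).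

Definition MPG {R : realType} {k p l : nat} (a b : R) (m : nat)
  (f : 'rV[R]_k -> 'cV[R]_p.+1) (x : 'I_l -> 'rV[R]_k) (w : 'I_l -> R)
  (beta : 'cV[R]_p.+1) : 'M[R]_p.+1 :=
  let M := MPo f x w beta in
  (a / b) *: (M - ((e1^T *m M *m e1) 0 0 + b / m%:R)^-1 *: (M *m e1 *m e1^T *m M)).

Definition Lmat {R : realType} {k p l : nat} (b : R) (m : nat)
  (f : 'rV[R]_k -> 'cV[R]_p.+1) (x : 'I_l -> 'rV[R]_k) (w : 'I_l -> R)
  (beta : 'cV[R]_p.+1) : 'M[R]_p.+1 :=
  let M := MPo f x w beta in
  1%:M - ((e1^T *m M *m e1) 0 0 + b / m%:R)^-1 *: (M *m e1 *m e1^T).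

(* Write P := M_Po, N := P e1 e1^T, c := e1^T P e1 and s := (c + b/m)^-1, so
   that L = 1 - s N.  Since N P e1 = c P e1 (hence N^2 = c N), L behaves like a
   scalar and everything reduces to 1 - s c = s b/m: L P = P - s N P is the
   bracket defining M, P L^T = L P because P is symmetric, L^-1 = 1 + (m/b) N,
   and M e1 = (a/b) (1 - s c) P e1 = (a/m) s P e1 recovers s N from M. *)
From HB Require Import structures.
From mathcomp Require Import all_boot all_order all_algebra.
From mathcomp Require Import all_classical all_reals all_analysis.
From mathcomp Require Import ring.
Import Order.TTheory GRing.Theory Num.Theory.
Local Open Scope ring_scope.

Lemma mulmx_col_row_col (R : comPzRingType) (n : nat)
    (v : 'cV[R]_n) (w : 'rV[R]_n) (z : 'cV[R]_n) :
  v *m w *m z = (w *m z) 0 0 *: v.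
Proof. by rewrite -mulmxA {1}(mx11_scalar (w *m z)) mul_mx_scalar. Qed.

Lemma tr_delta_mulmx_delta (R : pzRingType) (n : nat) (A : 'M[R]_n) (i j : 'I_n) :
  ((delta_mx i 0 : 'cV_n)^T *m A *m (delta_mx j 0 : 'cV_n)) 0 0 = A i j.
Proof. by rewrite trmx_delta -rowE -colE !mxE. Qed.

Definition corr_mx {R : fieldType} {n : nat} (M : 'M[R]_n) (u : 'cV[R]_n) (r : R) :=
  1%:M - ((u^T *m M *m u) 0 0 + r)^-1 *: (M *m u *m u^T).

Section RankOneCorrection.

Variables (R : fieldType) (n : nat) (M : 'M[R]_n) (u : 'cV[R]_n) (r : R).

Let c := (u^T *m M *m u) 0 0.
Let s := (c + r)^-1.
Let N := M *m u *m u^T.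
Let L := corr_mx M u r.

Lemma corr_mx_mulmx : L *m M = M - s *: (N *m M).
Proof. by rewrite /L /corr_mx mulmxBl mul1mx -scalemxAl. Qed.

Lemma mulmx_tr_corr_mx : M^T = M -> M *m L^T = M - s *: (N *m M).
Proof.
move=> Msym; rewrite /L /corr_mx /N linearB /= trmx1 linearZ /=.
by rewrite !trmx_mul trmxK Msym mulmxBr mulmx1 -scalemxAr !mulmxA.
Qed.

Lemma rank_one_mulmx_col : N *m (M *m u) = c *: (M *m u).
Proof. by rewrite /N mulmx_col_row_col /c mulmxA. Qed.

Lemma rank_one_sqr : N *m N = c *: N.
Proof. by rewrite {1}/N !mulmxA -(mulmxA N) rank_one_mulmx_col -scalemxAl. Qed.

Hypotheses (r_neq0 : r != 0) (cr_neq0 : c + r != 0).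

Lemma one_sub_corr_scale : 1 - s * c = r * s.
Proof. by rewrite /s; field. Qed.

Lemma corr_mx_unit : L \in unitmx.
Proof.
have [] // := @mulmx1_unit _ _ L (1%:M + r^-1 *: N).
rewrite /L /corr_mx -/c -/s -/N mulmxDr mulmx1 mulmxBl mul1mx.
rewrite -scalemxAl -scalemxAr rank_one_sqr !scalerA -addrA.
rewrite -scaleNr -!scalerBl -scalerDl.
have -> : - s + (r^-1 - s * r^-1 * c) = 0 by rewrite /s; field; apply/andP.
by rewrite scale0r addr0.
Qed.

Lemma corr_mx_mulmx_col : L *m M *m u = (r * s) *: (M *m u).
Proof.
rewrite corr_mx_mulmx mulmxBl -scalemxAl -mulmxA rank_one_mulmx_col scalerA.
by rewrite -{1}(scale1r (M *m u)) -scalerBl one_sub_corr_scale.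
Qed.

Lemma corr_mx_from_product : L = 1%:M - r^-1 *: (L *m M *m u *m u^T).
Proof.
rewrite corr_mx_mulmx_col -scalemxAl scalerA mulrA mulVf // mul1r.
by rewrite /L /corr_mx.
Qed.

End RankOneCorrection.

Lemma MPo_sym (R : realType) (k p l : nat) (f : 'rV[R]_k -> 'cV[R]_p.+1)
    (x : 'I_l -> 'rV[R]_k) (w : 'I_l -> R) (beta : 'cV[R]_p.+1) :
  (MPo f x w beta)^T = MPo f x w beta.
Proof.
rewrite /MPo linear_sum; apply: eq_bigr => j _.
by rewrite linearZ /= trmx_mul trmxK.
Qed.

Lemma MPo_diag_ge0 (R : realType) (k p l : nat) (f : 'rV[R]_k -> 'cV[R]_p.+1)
    (x : 'I_l -> 'rV[R]_k) (w : 'I_l -> R) (beta : 'cV[R]_p.+1) (i : 'I_p.+1) :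
  (forall j, 0 <= w j) -> 0 <= MPo f x w beta i i.
Proof.
move=> w_ge0; rewrite /MPo summxE; apply: sumr_ge0 => j _.
rewrite mxE; apply: mulr_ge0; first by rewrite mulr_ge0 ?expR_ge0.
by rewrite mxE; apply: sumr_ge0 => t _; rewrite mxE -expr2 sqr_ge0.
Qed.

Theorem lemma3 (R : realType) (k p : nat) (X : {pred 'rV[R]_k})
  (f : 'rV[R]_k -> 'cV[R]_p.+1)
  (hf1 : forall z, z \in X -> f z 0 0 = 1)
  (m : nat) (hm : (0 < m)%N) (a b : R) (ha : 0 < a) (hb : 0 < b)
  (beta : 'cV[R]_p.+1)
  (l : nat) (x : 'I_l -> 'rV[R]_k) (w : 'I_l -> R)
  (hxX : forall j, x j \in X) (hw0 : forall j, 0 <= w j)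
  (hw1 : \sum_(j < l) w j = 1) :
  [/\ MPG a b m f x w beta = (a / b) *: (Lmat b m f x w beta *m MPo f x w beta),
      MPG a b m f x w beta = (a / b) *: (MPo f x w beta *m (Lmat b m f x w beta)^T),
      Lmat b m f x w beta \in unitmx
    & Lmat b m f x w beta = 1%:M - (m%:R / a) *: (MPG a b m f x w beta *m e1 *m e1^T)].
Proof.
set M := MPo f x w beta; set r := b / m%:R.
have -> : Lmat b m f x w beta = corr_mx M e1 r by [].
have -> : MPG a b m f x w beta = (a / b) *: (corr_mx M e1 r *m M).
  by rewrite corr_mx_mulmx.
have r_gt0 : 0 < r by rewrite divr_gt0 ?ltr0n.
have r_neq0 : r != 0 by rewrite gt_eqF.
have c_ge0 : 0 <= (e1^T *m M *m e1) 0 0.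
  by rewrite tr_delta_mulmx_delta MPo_diag_ge0.
have cr_neq0 : (e1^T *m M *m e1) 0 0 + r != 0 by rewrite gt_eqF ?ltr_wpDl.
split.
- by [].
- by rewrite corr_mx_mulmx mulmx_tr_corr_mx ?MPo_sym.
- by apply: (@corr_mx_unit _ _ M e1 r).
- rewrite -!scalemxAl scalerA.
  have -> : m%:R / a * (a / b) = r^-1 by rewrite /r; field; rewrite !gt_eqF ?ltr0n.
  by apply: (@corr_mx_from_product _ _ M e1 r).
Qed.
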